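(* If $X\sim\mathcal N(0,\Sigma)$ is an $n$-dimensional Gaussian random vector and $\rho(x)=\max\{0,x\}$ acts entrywise, then $\mathbb E\|\rho(X)\|_2\ge\frac12\mathbb E\|X\|_2$. *)

From HB Require Import structures.
From mathcomp Require Import all_boot all_order all_algebra.
From mathcomp Require Import all_classical all_reals all_analysis.
Set Implicit Arguments. Unset Strict Implicit. Unset Printing Implicit Defensive.
Import Order.TTheory GRing.Theory Num.Theory.
Local Open Scope classical_set_scope.
Local Open Scope ring_scope.

(* Euclidean norm of a column vector (the library norm on matrices is the sup norm). *)
Definition l2norm {R : realType} {n : nat} (v : 'cV[R]_n) : R :=
  Num.sqrt (\sum_(i < n) v i ord0 ^+ 2).

Definition relu {R : realType} {n : nat} (v : 'cV[R]_n) : 'cV[R]_n :=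
  \col_i Num.max 0 (v i ord0).

Definition iid_std_normal {R : realType} (d : measure_display)
  (T : measurableType d) (P : probability T R) (k : nat) (Z : 'I_k -> T -> R) : Prop :=
  (forall j, measurable_fun setT (Z j)) /\
  (forall j (B : set R), measurable B -> P (Z j @^-1` B) = normal_prob 0 1 B) /\
  (forall B : 'I_k -> set R, (forall j, measurable (B j)) ->
     P (\bigcap_(j in [set: 'I_k]) (Z j @^-1` B j)) =
     (\prod_(j < k) P (Z j @^-1` B j))%E).

Definition centered_gaussian {R : realType} (d : measure_display)
  (T : measurableType d) (P : probability T R) (n : nat)
  (X : T -> 'cV[R]_n) (Sigma : 'M[R]_n) : Prop :=
  exists (k : nat) (A : 'M[R]_(n, k)) (Z : 'I_k -> T -> R),
    [/\ iid_std_normal P Z, Sigma = A *m A^T &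
        forall t, X t = A *m (\col_j Z j t)].

From HB Require Import structures.
From mathcomp Require Import all_boot all_order all_algebra.
From mathcomp Require Import all_classical all_reals all_analysis.
From mathcomp Require Import measurable_realfun lra.
Set Implicit Arguments. Unset Strict Implicit. Unset Printing Implicit Defensive.
Import Order.TTheory GRing.Theory Num.Theory.
Local Open Scope classical_set_scope.
Local Open Scope ring_scope.

(* Coordinatewise x_i^2 = rho(x_i)^2 + rho(-x_i)^2, so subadditivity of the square
   root gives |x| <= |rho(x)| + |rho(-x)|.  A centered Gaussian vector is symmetric:
   X = A Z and -X = A (-Z), where -Z is again a family of iid standard normals, and
   the joint law of iid standard normals is determined by its values on boxes.
   Hence E|X| <= E|rho(X)| + E|rho(-X)| = 2 E|rho(X)|. *)

(* The hypothesis [s != 0] is needed: [normal_pdf m 0] is the junk density of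
   the uniform law on [0, 1]. *)
Lemma normal_prob_preimage_oppr {R : realType} (s : R) (B : set R) :
  s != 0 -> measurable B ->
  (normal_prob 0 s ((-%R : R -> R) @^-1` B) = normal_prob 0 s B)%E.
Proof.
move=> s0 mB; rewrite /normal_prob.
transitivity (\int[lebesgue_measure]_(x in (-%R : R -> measurableTypeR R) @^-1` B)
   ((fun y => (normal_pdf 0 s y)%:E) \o (-%R : R -> measurableTypeR R)) x)%E.
  apply: eq_integral => x _ /=.
  by rewrite /normal_pdf (negbTE s0) /normal_fun !subr0 sqrrN.
rewrite -ge0_integral_pushforward//=; last 2 first.
- by apply/measurable_EFinP; apply: measurable_funTS; exact: measurable_normal_pdf.
- by move=> y _; rewrite lee_fin normal_pdf_ge0.
by apply: eq_measure_integral => //= A mA _; exact: lebesgue_measureN.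
Qed.

Section integral_law.
Local Open Scope ereal_scope.
Context d1 d2 (X : measurableType d1) (Y : measurableType d2) (R : realType).
Variable mu : {measure set X -> \bar R}.

Lemma ge0_integral_comp_eq_law (phi psi : X -> Y) (f : Y -> \bar R) :
  measurable_fun setT phi -> measurable_fun setT psi ->
  (forall A, measurable A -> mu (phi @^-1` A) = mu (psi @^-1` A)) ->
  measurable_fun setT f -> (forall y, 0 <= f y) ->
  \int[mu]_x f (phi x) = \int[mu]_x f (psi x).
Proof.
move=> mphi mpsi law mf f0.
rewrite -[in LHS](preimage_setT phi) -[in RHS](preimage_setT psi).
rewrite -!ge0_integral_pushforward// -/(pushforward mu psi).
by apply: eq_measure_integral => A mA _; exact: law.
Qed.

End integral_law.

Section tuple_boxes.
Context d (T : measurableType d) (k : nat).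

Definition box (B : 'I_k -> set T) : set (k.-tuple T) :=
  \bigcap_(j in [set: 'I_k]) ((fun x : k.-tuple T => tnth x j) @^-1` B j).

Definition boxes : set (set (k.-tuple T)) :=
  [set box B | B in [set B | forall j, measurable (B j)]].

Lemma boxes_measurable : boxes `<=` measurable.
Proof.
move=> _ [B mB <-]; apply: fin_bigcap_measurable => // j _.
by rewrite -[_ @^-1` _]setTI; exact: measurable_tnth.
Qed.

Lemma setI_closed_boxes : setI_closed boxes.
Proof.
move=> _ _ [B1 mB1 <-] [B2 mB2 <-]; exists (fun j => B1 j `&` B2 j).
  by move=> j; exact: measurableI.
by rewrite /box -bigcapI.
Qed.

Lemma measurable_tupleE : @measurable _ (k.-tuple T) = <<s boxes >>.
Proof.
apply/seteqP; split; last first.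
  exact: smallest_sub (@sigma_algebra_measurable _ _) boxes_measurable.
apply: smallest_sub; first exact: smallest_sigma_algebra.
elim/big_ind: _ => //; first by move=> ? ? ? ?; rewrite subUset.
move=> i _ _ [A mA <-]; apply: sub_sigma_algebra.
exists (fun j => if j == i then A else setT); first by move=> j; case: ifP.
apply/seteqP; split => [x /(_ i I)|x [_ Ax] j _ /=]; first by rewrite /= eqxx.
by case: ifPn => // /eqP ->.
Qed.

End tuple_boxes.

Section iid_std_normal_law.
Local Open Scope ereal_scope.
Context {R : realType} d (T : measurableType d) (P : probability T R) (k : nat).

Definition tuple_of_family (Z : 'I_k -> T -> R) (t : T) : k.-tuple R :=
  [tuple Z j t | j < k].

Lemma measurable_tuple_of_family (Z : 'I_k -> T -> R) :
  (forall j, measurable_fun setT (Z j)) -> measurable_fun setT (tuple_of_family Z).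
Proof.
move=> mZ; apply/measurable_fun_tnthP => j.
by rewrite (_ : _ \o _ = Z j)//; apply/funext => t /=; rewrite tnth_mktuple.
Qed.

Lemma iid_std_normal_box (Z : 'I_k -> T -> R) (B : 'I_k -> set R) :
  iid_std_normal P Z -> (forall j, measurable (B j)) ->
  P (tuple_of_family Z @^-1` box B) = \prod_(j < k) normal_prob 0 1 (B j).
Proof.
move=> [_ [marg indep]] mB.
have -> : tuple_of_family Z @^-1` box B = \bigcap_(j in [set: 'I_k]) (Z j @^-1` B j).
  by apply/seteqP; split => t tB j /(tB j); rewrite /= tnth_mktuple.
by rewrite indep//; apply: eq_bigr => j _; exact: marg.
Qed.

Lemma iid_std_normal_law_unique (Z Z' : 'I_k -> T -> R) :
  iid_std_normal P Z -> iid_std_normal P Z' ->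
  forall A, measurable A ->
  P (tuple_of_family Z @^-1` A) = P (tuple_of_family Z' @^-1` A).
Proof.
move=> hZ hZ' A mA.
have mZ := measurable_tuple_of_family hZ.1.
have mZ' := measurable_tuple_of_family hZ'.1.
change (pushforward P (tuple_of_family Z) A = pushforward P (tuple_of_family Z') A).
apply: (measure_unique (@boxes _ R k) (fun=> setT)) => //.
- exact: measurable_tupleE.
- exact: setI_closed_boxes.
- move=> _; exists (fun=> setT) => //.
  by apply/seteqP; split.
- by rewrite bigcup_const.
- move=> _ [B mB <-].
  exact: etrans (iid_std_normal_box hZ mB) (esym (iid_std_normal_box hZ' mB)).
- move=> _; change (P (tuple_of_family Z @^-1` setT) < +oo).
  by rewrite preimage_setT probability_setT ltry.
Qed.

Lemma iid_std_normal_oppr (Z : 'I_k -> T -> R) :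
  iid_std_normal P Z -> iid_std_normal P (fun j t => - Z j t)%R.
Proof.
move=> [mZ [marg indep]].
have mN (B : set R) : measurable B -> measurable ((-%R : R -> R) @^-1` B).
  by move=> mB; rewrite -[_ @^-1` _]setTI; exact: measurable_funN.
split; [|split].
- by move=> j; exact: measurable_funN.
- move=> j B mB; rewrite -(normal_prob_preimage_oppr (oner_neq0 R) mB).
  exact: (marg j _ (mN _ mB)).
- by move=> B mB; exact: (indep _ (fun j => mN _ (mB j))).
Qed.

End iid_std_normal_law.

Lemma sqrtrD_le {R : rcfType} (a b : R) : 0 <= a -> 0 <= b ->
  Num.sqrt (a + b) <= Num.sqrt a + Num.sqrt b.
Proof.
move=> a0 b0; have sa := sqrtr_ge0 a; have sb := sqrtr_ge0 b.
rewrite -[leRHS]ger0_norm ?addr_ge0// -sqrtr_sqr ler_wsqrtr// sqrrD !sqr_sqrtr//.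
by have := mulr_ge0 sa sb; lra.
Qed.

Lemma sqr_max0_addN {R : realDomainType} (y : R) :
  Num.max 0 y ^+ 2 + Num.max 0 (- y) ^+ 2 = y ^+ 2.
Proof.
have [y0|y0] := lerP 0 y.
  by rewrite (max_idPl (_ : - y <= 0)) ?oppr_le0// expr0n addr0.
by rewrite (max_idPr (_ : 0 <= - y)) ?oppr_ge0 ?ltW// sqrrN expr0n add0r.
Qed.

Lemma l2norm_le_relu_addN {R : realType} n (x : 'cV[R]_n) :
  l2norm x <= l2norm (relu x) + l2norm (relu (- x)).
Proof.
rewrite /l2norm -(eq_bigr _ (fun i _ => sqr_max0_addN (x i ord0))) big_split /=.
under [in leRHS]eq_bigr do rewrite mxE.
under [X in _ <= _ + Num.sqrt X]eq_bigr do rewrite !mxE.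
by apply: sqrtrD_le; apply: sumr_ge0 => i _; exact: sqr_ge0.
Qed.

Section measurable_vector_functions.
Context {R : realType} d (Y : measurableType d) (n : nat) (F : Y -> 'cV[R]_n).
Hypothesis mF : forall i, measurable_fun setT (fun y => F y i ord0).

Lemma measurable_l2norm : measurable_fun setT (fun y => l2norm (F y)).
Proof.
apply: measurableT_comp (continuous_measurable_fun (@sqrt_continuous R)) _.
by apply: measurable_sum => i; exact: measurable_funX.
Qed.

Lemma measurable_relu_coord i : measurable_fun setT (fun y => relu (F y) i ord0).
Proof.
under eq_fun do rewrite mxE.
by have := measurable_maxr (measurable_cst (0 : R)) (mF i).
Qed.

End measurable_vector_functions.

Lemma measurable_mulmx_col {R : realType} d (Y : measurableType d) n k
    (A : 'M[R]_(n, k)) (F : 'I_k -> Y -> R) :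
  (forall j, measurable_fun setT (F j)) ->
  forall i, measurable_fun setT (fun y => (A *m \col_j F j y) i ord0).
Proof.
move=> mF i; under eq_fun do rewrite mxE.
apply: measurable_sum => j; apply: measurable_funM => //.
by under eq_fun do rewrite mxE; exact: mF.
Qed.

Lemma halfe_le_of_le_double {R : realFieldType} (a b : \bar R) :
  (0 <= a -> a <= b + b -> 2^-1%:E * a <= b)%E.
Proof.
case: a => [a| |] //; case: b => [b| |] //; rewrite ?leey //.
by rewrite -EFinD -EFinM !lee_fin => _; lra.
Qed.

Section centered_gaussian.
Local Open Scope ereal_scope.
Context {R : realType} d (T : measurableType d) (P : probability T R) (n : nat).
Variables (X : T -> 'cV[R]_n) (Sigma : 'M[R]_n).
Hypothesis gX : centered_gaussian P X Sigma.

Lemma measurable_centered_gaussian_coord i :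
  measurable_fun setT (fun t => X t i ord0).
Proof.
by case: gX => k [A [Z [[mZ _] _ /funext ->]]]; exact: measurable_mulmx_col.
Qed.

Lemma integral_l2norm_relu_oppr :
  \int[P]_t (l2norm (relu (X t)))%:E = \int[P]_t (l2norm (relu (- X t)))%:E.
Proof.
case: gX => k [A [Z [hZ _ /funext ->]]]; have hNZ := iid_std_normal_oppr hZ.
pose f (z : k.-tuple R) := (l2norm (relu (A *m \col_j tnth z j)))%:E.
have mf : measurable_fun setT f.
  apply/measurable_EFinP/measurable_l2norm => i; apply: measurable_relu_coord.
  by apply: measurable_mulmx_col => j; exact: measurable_tnth.
transitivity (\int[P]_t f (tuple_of_family Z t)).
  apply: eq_integral => t _; congr (l2norm (relu (A *m _)))%:E.
  by apply/matrixP => i j; rewrite !mxE tnth_mktuple.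
transitivity (\int[P]_t f (tuple_of_family (fun j t => - Z j t)%R t)); last first.
  apply: eq_integral => t _; rewrite -mulmxN; congr (l2norm (relu (A *m _)))%:E.
  by apply/matrixP => i j; rewrite !mxE tnth_mktuple.
apply: ge0_integral_comp_eq_law => //.
- exact: measurable_tuple_of_family hZ.1.
- exact: measurable_tuple_of_family hNZ.1.
- exact: iid_std_normal_law_unique.
- by move=> z; rewrite lee_fin sqrtr_ge0.
Qed.

End centered_gaussian.

Theorem mainTheorem17 (R : realType) (d : measure_display) (T : measurableType d)
  (P : probability T R) (n : nat) (X : T -> 'cV[R]_n) (Sigma : 'M[R]_n) :
  centered_gaussian P X Sigma ->
  ((2^-1)%:E * \int[P]_t (l2norm (X t))%:E <= \int[P]_t (l2norm (relu (X t)))%:E)%E.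
Proof.
move=> gX; have mX := measurable_centered_gaussian_coord gX.
have mNX i : measurable_fun setT (fun t => (- X t) i ord0).
  by under eq_fun do rewrite mxE; exact: measurable_funN.
have norm_ge0 (v : 'cV[R]_n) : (0 <= (l2norm v)%:E)%E by rewrite lee_fin sqrtr_ge0.
have m_norm : measurable_fun setT (fun t => (l2norm (X t))%:E).
  exact/measurable_EFinP/measurable_l2norm.
have m_relu : measurable_fun setT (fun t => (l2norm (relu (X t)))%:E).
  exact/measurable_EFinP/measurable_l2norm/measurable_relu_coord.
have m_reluN : measurable_fun setT (fun t => (l2norm (relu (- X t)))%:E).
  exact/measurable_EFinP/measurable_l2norm/measurable_relu_coord.
apply: halfe_le_of_le_double; first exact: integral_ge0.
rewrite [X in (_ <= _ + X)%E](integral_l2norm_relu_oppr gX) -ge0_integralD//.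
apply: ge0_le_integral => //; first exact: emeasurable_funD.
by move=> t _; rewrite -EFinD lee_fin l2norm_le_relu_addN.
Qed.
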